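(* A double functor $F\colon\mathbb{A}\to\mathbb{B}$ is a cofibration in the model structure on $\mathrm{DblCat}$ right-induced along $(\mathbf{H},\mathcal{V})$ from two copies of the Lack model structure if and only if (i) the functor $U\mathbf{H}F\colon U\mathbf{H}\mathbb{A}\to U\mathbf{H}\mathbb{B}$ has the left lifting property with respect to all functors that are surjective on objects and full, and (ii) the functor $U\mathbf{V}F\colon U\mathbf{V}\mathbb{A}\to U\mathbf{V}\mathbb{B}$ has the left lifting property with respect to all functors that are surjective on objects and surjective on morphisms.
   Context: The model structure on $\mathrm{DblCat}$ (double categories and strict double functors) in question has weak equivalences the double functors $F$ with $\mathbf{H}F$ and $\mathcal{V}F$ biequivalences, fibrations those with $\mathbf{H}F$ and $\mathcal{V}F$ Lack fibrations, and cofibrations those with the left lifting property against trivial fibrations; the trivial fibrations are exactly the double functors $F$ that are surjective on objects, full on horizontal morphisms (every horizontal $b\colon FA\to FC$ is $Fa$ for some $a\colon A\to C$), surjective on vertical morphisms, and fully faithful on squares (every square $(Fu\,{}^{Fa}_{Fc}\,Fu')$ is $F\alpha$ for a unique $\alpha\colon(u\,{}^{a}_{c}\,u')$). Here $\mathbf{H}\mathbb{A}$ is the underlying horizontal 2-category of $\mathbb{A}$ and $\mathcal{V}\mathbb{A}$ the 2-category of vertical morphisms and squares. $U\colon 2\mathrm{Cat}\to\mathrm{Cat}$ takes underlying categories; $U\mathbf{H}\mathbb{A}$ is the category of objects and horizontal morphisms of $\mathbb{A}$ and $U\mathbf{V}\mathbb{A}$ the category of objects and vertical morphisms of $\mathbb{A}$.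 *)

Definition sq_cast {O : Type} {H V : O -> O -> Type}
  (S : forall A B C D : O, V A C -> V B D -> H A B -> H C D -> Type)
  {A B C D : O} {u u1 : V A C} {u' u1' : V B D} {a a1 : H A B} {c c1 : H C D}
  (e1 : u = u1) (e2 : u' = u1') (e3 : a = a1) (e4 : c = c1)
  (s : S A B C D u u' a c) : S A B C D u1 u1' a1 c1 :=
  match e4 in _ = z return S A B C D u1 u1' a1 z with eq_refl =>
  match e3 in _ = y return S A B C D u1 u1' y c with eq_refl =>
  match e2 in _ = x return S A B C D u1 x a c with eq_refl =>
  match e1 in _ = w return S A B C D w u' a c with eq_refl => s end end end end.

(** Strict double categories.  [sq u u' a c] is a square with left vertical
    boundary [u], right [u'], top horizontal [a], bottom [c]:
        A --a--> B
        u        u'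
        C --c--> D                                                           *)
Record DblCat := {
  dob : Type;
  hom_h : dob -> dob -> Type;
  hom_v : dob -> dob -> Type;
  sq : forall {A B C D : dob}, hom_v A C -> hom_v B D -> hom_h A B -> hom_h C D -> Type;
  hid : forall A, hom_h A A;
  hcomp : forall {A B C}, hom_h A B -> hom_h B C -> hom_h A C;
  vid : forall A, hom_v A A;
  vcomp : forall {A B C}, hom_v A B -> hom_v B C -> hom_v A C;
  hcompS : forall {A B C D E F} {u : hom_v A D} {u' : hom_v B E} {u'' : hom_v C F}
      {a : hom_h A B} {b : hom_h B C} {c : hom_h D E} {d : hom_h E F},
      sq u u' a c -> sq u' u'' b d -> sq u u'' (hcomp a b) (hcomp c d);
  vcompS : forall {A B C D E F} {u : hom_v A C} {u' : hom_v B D} {v : hom_v C E}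
      {v' : hom_v D F} {a : hom_h A B} {c : hom_h C D} {e : hom_h E F},
      sq u u' a c -> sq v v' c e -> sq (vcomp u v) (vcomp u' v') a e;
  idH : forall {A B} (a : hom_h A B), sq (vid A) (vid B) a a;
  idV : forall {A C} (u : hom_v A C), sq u u (hid A) (hid C);
  hassoc : forall A B C D (a : hom_h A B) (b : hom_h B C) (c : hom_h C D),
      hcomp (hcomp a b) c = hcomp a (hcomp b c);
  hidl : forall A B (a : hom_h A B), hcomp (hid A) a = a;
  hidr : forall A B (a : hom_h A B), hcomp a (hid B) = a;
  vassoc : forall A B C D (u : hom_v A B) (v : hom_v B C) (w : hom_v C D),
      vcomp (vcomp u v) w = vcomp u (vcomp v w);
  vidl : forall A B (u : hom_v A B), vcomp (vid A) u = u;
  vidr : forall A B (u : hom_v A B), vcomp u (vid B) = u;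
  hassocS : forall A B C D A' B' C' D' (u1 : hom_v A A') (u2 : hom_v B B')
      (u3 : hom_v C C') (u4 : hom_v D D') (a : hom_h A B) (b : hom_h B C) (c : hom_h C D)
      (d : hom_h A' B') (e : hom_h B' C') (f : hom_h C' D')
      (al : sq u1 u2 a d) (be : sq u2 u3 b e) (ga : sq u3 u4 c f),
      sq_cast (@sq) eq_refl eq_refl (hassoc _ _ _ _ a b c) (hassoc _ _ _ _ d e f)
        (hcompS (hcompS al be) ga) = hcompS al (hcompS be ga);
  hidlS : forall A B C D (u : hom_v A C) (u' : hom_v B D) (a : hom_h A B) (c : hom_h C D)
      (al : sq u u' a c),
      sq_cast (@sq) eq_refl eq_refl (hidl _ _ a) (hidl _ _ c) (hcompS (idV u) al) = al;
  hidrS : forall A B C D (u : hom_v A C) (u' : hom_v B D) (a : hom_h A B) (c : hom_h C D)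
      (al : sq u u' a c),
      sq_cast (@sq) eq_refl eq_refl (hidr _ _ a) (hidr _ _ c) (hcompS al (idV u')) = al;
  vassocS : forall A B C D E F G H (u : hom_v A C) (u' : hom_v B D) (v : hom_v C E)
      (v' : hom_v D F) (w : hom_v E G) (w' : hom_v F H)
      (a : hom_h A B) (c : hom_h C D) (e : hom_h E F) (g : hom_h G H)
      (al : sq u u' a c) (be : sq v v' c e) (ga : sq w w' e g),
      sq_cast (@sq) (vassoc _ _ _ _ u v w) (vassoc _ _ _ _ u' v' w') eq_refl eq_refl
        (vcompS (vcompS al be) ga) = vcompS al (vcompS be ga);
  vidlS : forall A B C D (u : hom_v A C) (u' : hom_v B D) (a : hom_h A B) (c : hom_h C D)
      (al : sq u u' a c),
      sq_cast (@sq) (vidl _ _ u) (vidl _ _ u') eq_refl eq_refl (vcompS (idH a) al) = al;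
  vidrS : forall A B C D (u : hom_v A C) (u' : hom_v B D) (a : hom_h A B) (c : hom_h C D)
      (al : sq u u' a c),
      sq_cast (@sq) (vidr _ _ u) (vidr _ _ u') eq_refl eq_refl (vcompS al (idH c)) = al;
  interchange : forall A B C D E F G H I
      (u : hom_v A D) (v : hom_v B E) (w : hom_v C F)
      (u' : hom_v D G) (v' : hom_v E H) (w' : hom_v F I)
      (a : hom_h A B) (b : hom_h B C) (c : hom_h D E) (d : hom_h E F)
      (e : hom_h G H) (f : hom_h H I)
      (al : sq u v a c) (be : sq v w b d) (ga : sq u' v' c e) (de : sq v' w' d f),
      vcompS (hcompS al be) (hcompS ga de) = hcompS (vcompS al ga) (vcompS be de);
  idH_hcomp : forall A B C (a : hom_h A B) (b : hom_h B C),
      hcompS (idH a) (idH b) = idH (hcomp a b);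
  idV_vcomp : forall A B C (u : hom_v A B) (v : hom_v B C),
      vcompS (idV u) (idV v) = idV (vcomp u v);
  idV_vid : forall A, idV (vid A) = idH (hid A)
}.


Record DblFunctor (X Y : DblCat) := {
  F0 : dob X -> dob Y;
  Fh : forall {A B}, hom_h X A B -> hom_h Y (F0 A) (F0 B);
  Fv : forall {A B}, hom_v X A B -> hom_v Y (F0 A) (F0 B);
  Fs : forall {A B C D} {u : hom_v X A C} {u' : hom_v X B D} {a : hom_h X A B}
      {c : hom_h X C D}, sq X u u' a c -> sq Y (Fv u) (Fv u') (Fh a) (Fh c);
  Fh_id : forall A, Fh (hid X A) = hid Y (F0 A);
  Fh_comp : forall A B C (a : hom_h X A B) (b : hom_h X B C),
      Fh (hcomp X a b) = hcomp Y (Fh a) (Fh b);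
  Fv_id : forall A, Fv (vid X A) = vid Y (F0 A);
  Fv_comp : forall A B C (u : hom_v X A B) (v : hom_v X B C),
      Fv (vcomp X u v) = vcomp Y (Fv u) (Fv v);
  Fs_hcomp : forall A B C D E F (u : hom_v X A D) (u' : hom_v X B E) (u'' : hom_v X C F)
      (a : hom_h X A B) (b : hom_h X B C) (c : hom_h X D E) (d : hom_h X E F)
      (al : sq X u u' a c) (be : sq X u' u'' b d),
      sq_cast (@sq Y) eq_refl eq_refl (Fh_comp _ _ _ a b) (Fh_comp _ _ _ c d)
        (Fs (hcompS X al be)) = hcompS Y (Fs al) (Fs be);
  Fs_vcomp : forall A B C D E F (u : hom_v X A C) (u' : hom_v X B D) (v : hom_v X C E)
      (v' : hom_v X D F) (a : hom_h X A B) (c : hom_h X C D) (e : hom_h X E F)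
      (al : sq X u u' a c) (be : sq X v v' c e),
      sq_cast (@sq Y) (Fv_comp _ _ _ u v) (Fv_comp _ _ _ u' v') eq_refl eq_refl
        (Fs (vcompS X al be)) = vcompS Y (Fs al) (Fs be);
  Fs_idH : forall A B (a : hom_h X A B),
      sq_cast (@sq Y) (Fv_id A) (Fv_id B) eq_refl eq_refl (Fs (idH X a)) = idH Y (Fh a);
  Fs_idV : forall A C (u : hom_v X A C),
      sq_cast (@sq Y) eq_refl eq_refl (Fh_id A) (Fh_id C) (Fs (idV X u)) = idV Y (Fv u)
}.

Arguments F0 {X Y} _ _.
Arguments Fh {X Y} _ {A B} _.
Arguments Fv {X Y} _ {A B} _.
Arguments Fs {X Y} _ {A B C D u u' a c} _.

(** Equality in these record types is equality of
    morphisms/squares together with their boundaries. *)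
Record HArr (X : DblCat) := mkHArr { ha_s : dob X; ha_t : dob X; ha_m : hom_h X ha_s ha_t }.
Record VArr (X : DblCat) := mkVArr { va_s : dob X; va_t : dob X; va_m : hom_v X va_s va_t }.
Record SqArr (X : DblCat) := mkSqArr {
  s_A : dob X; s_B : dob X; s_C : dob X; s_D : dob X;
  s_u : hom_v X s_A s_C; s_u' : hom_v X s_B s_D;
  s_a : hom_h X s_A s_B; s_c : hom_h X s_C s_D;
  s_sq : sq X s_u s_u' s_a s_c }.

Arguments mkHArr {X ha_s ha_t} _.
Arguments mkVArr {X va_s va_t} _.
Arguments mkSqArr {X s_A s_B s_C s_D s_u s_u' s_a s_c} _.
Arguments ha_m {X} _.
Arguments va_m {X} _.
Arguments s_sq {X} _.

Definition mapH {X Y} (F : DblFunctor X Y) (h : HArr X) : HArr Y :=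
  mkHArr (Fh F (ha_m h)).
Definition mapV {X Y} (F : DblFunctor X Y) (v : VArr X) : VArr Y :=
  mkVArr (Fv F (va_m v)).
Definition mapS {X Y} (F : DblFunctor X Y) (s : SqArr X) : SqArr Y :=
  mkSqArr (Fs F (s_sq s)).

Definition dcomm {X Y Y' Z} (F : DblFunctor X Y) (G : DblFunctor Y Z)
    (H : DblFunctor X Y') (K : DblFunctor Y' Z) : Prop :=
  (forall x, F0 G (F0 F x) = F0 K (F0 H x)) /\
  (forall h, mapH G (mapH F h) = mapH K (mapH H h)) /\
  (forall v, mapV G (mapV F v) = mapV K (mapV H v)) /\
  (forall s, mapS G (mapS F s) = mapS K (mapS H s)).

Definition dtri {X Y Z} (F : DblFunctor X Y) (G : DblFunctor Y Z)
    (H : DblFunctor X Z) : Prop :=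
  (forall x, F0 G (F0 F x) = F0 H x) /\
  (forall h, mapH G (mapH F h) = mapH H h) /\
  (forall v, mapV G (mapV F v) = mapV H v) /\
  (forall s, mapS G (mapS F s) = mapS H s).

Definition dLLP {A B} (i : DblFunctor A B)
    (P : forall C D : DblCat, DblFunctor C D -> Prop) : Prop :=
  forall (C D : DblCat) (p : DblFunctor C D), P C D p ->
  forall (u : DblFunctor A C) (v : DblFunctor B D), dcomm u p i v ->
  exists d : DblFunctor B C, dtri i d u /\ dtri d p v.

(** Trivial fibrations of the model structure on DblCat (as characterized in
    the paper): surjective on objects, full on horizontal morphisms,
    surjective on vertical morphisms, fully faithful on squares. *)
Definition dtriv_fib (C D : DblCat) (P : DblFunctor C D) : Prop :=
  (forall y : dob D, exists x : dob C, F0 P x = y) /\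
  (forall (A C' : dob C) (b : hom_h D (F0 P A) (F0 P C')),
      exists a : hom_h C A C', Fh P a = b) /\
  (forall v : VArr D, exists u : VArr C, mapV P u = v) /\
  (forall (A B0 C' D0 : dob C) (u : hom_v C A C') (u' : hom_v C B0 D0)
      (a : hom_h C A B0) (c : hom_h C C' D0)
      (be : sq D (Fv P u) (Fv P u') (Fh P a) (Fh P c)),
      exists al : sq C u u' a c, Fs P al = be /\
        forall al' : sq C u u' a c, Fs P al' = be -> al' = al).

Definition dcofibration {A B} (F : DblFunctor A B) : Prop := dLLP F dtriv_fib.

Record Cat := {
  cob : Type;
  chom : cob -> cob -> Type;
  cid : forall x, chom x x;
  ccomp : forall {x y z}, chom x y -> chom y z -> chom x z;  (* diagrammatic order *)
  cassoc : forall x y z w (f : chom x y) (g : chom y z) (h : chom z w),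
      ccomp (ccomp f g) h = ccomp f (ccomp g h);
  cidl : forall x y (f : chom x y), ccomp (cid x) f = f;
  cidr : forall x y (f : chom x y), ccomp f (cid y) = f
}.

Record Functor (C D : Cat) := {
  fo : cob C -> cob D;
  fm : forall {x y}, chom C x y -> chom D (fo x) (fo y);
  fm_id : forall x, fm (cid C x) = cid D (fo x);
  fm_comp : forall x y z (f : chom C x y) (g : chom C y z),
      fm (ccomp C f g) = ccomp D (fm f) (fm g)
}.

Arguments fo {C D} _ _.
Arguments fm {C D} _ {x y} _.

Record Arr (C : Cat) := mkArr { a_s : cob C; a_t : cob C; a_m : chom C a_s a_t }.
Arguments mkArr {C a_s a_t} _.
Arguments a_m {C} _.

Definition mapA {C D} (F : Functor C D) (f : Arr C) : Arr D := mkArr (fm F (a_m f)).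

Definition fcomm {X Y Y' Z} (F : Functor X Y) (G : Functor Y Z)
    (H : Functor X Y') (K : Functor Y' Z) : Prop :=
  (forall x, fo G (fo F x) = fo K (fo H x)) /\
  (forall f, mapA G (mapA F f) = mapA K (mapA H f)).

Definition ftri {X Y Z} (F : Functor X Y) (G : Functor Y Z) (H : Functor X Z) : Prop :=
  (forall x, fo G (fo F x) = fo H x) /\
  (forall f, mapA G (mapA F f) = mapA H f).

Definition fLLP {A B} (i : Functor A B) (P : forall C D : Cat, Functor C D -> Prop) : Prop :=
  forall (C D : Cat) (p : Functor C D), P C D p ->
  forall (u : Functor A C) (v : Functor B D), fcomm u p i v ->
  exists d : Functor B C, ftri i d u /\ ftri d p v.

Definition surj_obj_full (C D : Cat) (p : Functor C D) : Prop :=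
  (forall y, exists x, fo p x = y) /\
  (forall x x' (g : chom D (fo p x) (fo p x')), exists f : chom C x x', fm p f = g).

Definition surj_obj_mor (C D : Cat) (p : Functor C D) : Prop :=
  (forall y, exists x, fo p x = y) /\
  (forall g : Arr D, exists f : Arr C, mapA p f = g).

Definition UH (X : DblCat) : Cat :=
  {| cob := dob X; chom := hom_h X; cid := hid X; ccomp := @hcomp X;
     cassoc := hassoc X; cidl := hidl X; cidr := hidr X |}.
Definition UV (X : DblCat) : Cat :=
  {| cob := dob X; chom := hom_v X; cid := vid X; ccomp := @vcomp X;
     cassoc := vassoc X; cidl := vidl X; cidr := vidr X |}.

Definition UHF {X Y} (F : DblFunctor X Y) : Functor (UH X) (UH Y) :=
  @Build_Functor (UH X) (UH Y) (F0 F) (fun A B a => Fh F a)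
    (Fh_id X Y F) (Fh_comp X Y F).
Definition UVF {X Y} (F : DblFunctor X Y) : Functor (UV X) (UV Y) :=
  @Build_Functor (UV X) (UV Y) (F0 F) (fun A B u => Fv F u)
    (Fv_id X Y F) (Fv_comp X Y F).

From Stdlib Require Import Program.Equality IndefiniteDescription.

(** Forward.  [UH] and [UV] have right adjoints [RH], [RV]: a category [C] seen
    as a double category with horizontal (resp. vertical) category [C] and a
    unique cell of every other kind.  [RH p] (resp. [RV p]) is a trivial
    fibration for [p] as in (i) (resp. (ii)); a lifting problem for [UH F]
    against [p] transposes to one for [F] against [RH p], and the solution
    restricts back.

    Backward.  Given a trivial fibration [P] and a commutative square, lift
    [UV F] against [UV P]; this fixes an object map [o].  Lifting [UH F] against
    the identity-on-objects, full functor induced by [P] on the reindexings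
    along [o] gives a horizontal lift with the same object map.  Since [P] is
    fully faithful on squares, the action on squares is forced, and the two
    lifts glue into a double functor solving the problem. *)

Definition chcast (C : Cat) {x x' y y' : cob C} (e : x = x') (e' : y = y')
    (f : chom C x y) : chom C x' y' :=
  match e in _ = a return chom C a y' with eq_refl =>
  match e' in _ = b return chom C x b with eq_refl => f end end.

Lemma chcast_arr (C : Cat) x x' y y' (e : x = x') (e' : y = y') (f : chom C x y) :
  mkArr (chcast C e e' f) = mkArr f.
Proof. destruct e, e'; reflexivity. Qed.

Lemma chcast_id (C : Cat) x x' (e : x = x') : chcast C e e (cid C x) = cid C x'.
Proof. destruct e; reflexivity. Qed.

Lemma chcast_comp (C : Cat) x x' y y' z z' (e1 : x = x') (e2 : y = y') (e3 : z = z')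
    (f : chom C x y) (g : chom C y z) :
  chcast C e1 e3 (ccomp C f g) = ccomp C (chcast C e1 e2 f) (chcast C e2 e3 g).
Proof. destruct e1, e2, e3; reflexivity. Qed.

Lemma fm_chcast {X Y : Cat} (Fn : Functor X Y) x1 y1 x2 y2 z w (f : chom X x1 y1)
    (g : chom Y x2 y2) (e1 : x1 = z) (e2 : y1 = w) (e3 : x2 = fo Fn z) (e4 : y2 = fo Fn w) :
  mkArr (fm Fn f) = mkArr g -> fm Fn (chcast X e1 e2 f) = chcast Y e3 e4 g.
Proof.
subst z w x2 y2; cbn. intros H. dependent destruction H. reflexivity.
Qed.

Definition with_objects {X Y : Cat} (Fn : Functor X Y) (o : cob X -> cob Y)
    (E : forall x, fo Fn x = o x) : Functor X Y.
Proof.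
refine (Build_Functor X Y o (fun x y m => chcast Y (E x) (E y) (fm Fn m)) _ _).
- intros x. rewrite fm_id. apply chcast_id.
- intros x y z f g. rewrite fm_comp. apply chcast_comp.
Defined.

Lemma mapA_with_objects {X Y : Cat} (Fn : Functor X Y) o E f :
  mapA (with_objects Fn o E) f = mapA Fn f.
Proof. destruct f. apply chcast_arr. Qed.

Definition fcomp {X Y Z : Cat} (F : Functor X Y) (G : Functor Y Z) : Functor X Z.
Proof.
refine (Build_Functor X Z (fun x => fo G (fo F x)) (fun x y m => fm G (fm F m)) _ _).
- intros. rewrite !fm_id. reflexivity.
- intros. rewrite !fm_comp. reflexivity.
Defined.

Lemma unit_eq (x y : unit) : x = y.
Proof. destruct x, y; reflexivity. Qed.

(** [RH C]: the double category with horizontal category [C] and exactly one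
    vertical morphism and one square for each possible boundary.  [RH] is right
    adjoint to [UH]: double functors [X -> RH C] are functors [UH X -> C]. *)
Definition RH (C : Cat) : DblCat.
Proof.
unshelve refine {| dob := cob C; hom_h := chom C; hom_v := fun _ _ => unit;
  sq := fun _ _ _ _ _ _ _ _ => unit; hid := cid C; hcomp := @ccomp C;
  vid := fun _ => tt; vcomp := fun _ _ _ _ _ => tt;
  hassoc := cassoc C; hidl := cidl C; hidr := cidr C |}.
all: intros; first [exact tt | apply unit_eq].
Defined.

(** [RV C]: the transposed construction, right adjoint to [UV]. *)
Definition RV (C : Cat) : DblCat.
Proof.
unshelve refine {| dob := cob C; hom_h := fun _ _ => unit; hom_v := chom C;
  sq := fun _ _ _ _ _ _ _ _ => unit; vid := cid C; vcomp := @ccomp C;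
  hid := fun _ => tt; hcomp := fun _ _ _ _ _ => tt;
  vassoc := cassoc C; vidl := cidl C; vidr := cidr C |}.
all: intros; first [exact tt | apply unit_eq].
Defined.

Definition transposeH {X : DblCat} {C : Cat} (G : Functor (UH X) C) : DblFunctor X (RH C).
Proof.
unshelve refine {| F0 := (fo G : dob X -> dob (RH C)); Fh := fun _ _ a => fm G a;
  Fv := fun _ _ _ => tt; Fs := fun _ _ _ _ _ _ _ _ _ => tt;
  Fh_id := fm_id _ _ G; Fh_comp := fm_comp _ _ G |}.
all: intros; apply unit_eq.
Defined.

Definition transposeV {X : DblCat} {C : Cat} (G : Functor (UV X) C) : DblFunctor X (RV C).
Proof.
unshelve refine {| F0 := (fo G : dob X -> dob (RV C)); Fv := fun _ _ a => fm G a;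
  Fh := fun _ _ _ => tt; Fs := fun _ _ _ _ _ _ _ _ _ => tt;
  Fv_id := fm_id _ _ G; Fv_comp := fm_comp _ _ G |}.
all: intros; apply unit_eq.
Defined.

Definition counitH (C : Cat) : Functor (UH (RH C)) C :=
  Build_Functor (UH (RH C)) C (fun x => x) (fun _ _ f => f)
    (fun _ => eq_refl) (fun _ _ _ _ _ => eq_refl).

Definition counitV (C : Cat) : Functor (UV (RV C)) C :=
  Build_Functor (UV (RV C)) C (fun x => x) (fun _ _ f => f)
    (fun _ => eq_refl) (fun _ _ _ _ _ => eq_refl).

Definition RH_functor {C D : Cat} (p : Functor C D) : DblFunctor (RH C) (RH D) :=
  transposeH (fcomp (counitH C) p).
Definition RV_functor {C D : Cat} (p : Functor C D) : DblFunctor (RV C) (RV D) :=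
  transposeV (fcomp (counitV C) p).

Definition restrictH {X : DblCat} {C : Cat} (d : DblFunctor X (RH C)) : Functor (UH X) C :=
  fcomp (UHF d) (counitH C).
Definition restrictV {X : DblCat} {C : Cat} (d : DblFunctor X (RV C)) : Functor (UV X) C :=
  fcomp (UVF d) (counitV C).

Definition HArr_of_Arr {C : Cat} (g : Arr C) : HArr (RH C) := @mkHArr (RH C) _ _ (a_m g).
Definition Arr_of_HArr {C : Cat} (h : HArr (RH C)) : Arr C := @mkArr C _ _ (ha_m h).
Definition VArr_of_Arr {C : Cat} (g : Arr C) : VArr (RV C) := @mkVArr (RV C) _ _ (a_m g).
Definition Arr_of_VArr {C : Cat} (h : VArr (RV C)) : Arr C := @mkArr C _ _ (va_m h).

Lemma RH_varr_eq (C : Cat) (s t : VArr (RH C)) :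
  va_s _ s = va_s _ t -> va_t _ s = va_t _ t -> s = t.
Proof. destruct s as [x y []], t as [x' y' []]; cbn; intros -> ->; reflexivity. Qed.

Lemma RH_sqarr_eq (C : Cat) (s t : SqArr (RH C)) :
  mkHArr (s_a _ s) = mkHArr (s_a _ t) -> mkHArr (s_c _ s) = mkHArr (s_c _ t) -> s = t.
Proof.
destruct s as [? ? ? ? [] [] a c []], t as [? ? ? ? [] [] a' c' []]; cbn.
intros Ha Hc. dependent destruction Ha. dependent destruction Hc. reflexivity.
Qed.

Lemma RV_harr_eq (C : Cat) (s t : HArr (RV C)) :
  ha_s _ s = ha_s _ t -> ha_t _ s = ha_t _ t -> s = t.
Proof. destruct s as [x y []], t as [x' y' []]; cbn; intros -> ->; reflexivity. Qed.

Lemma RV_sqarr_eq (C : Cat) (s t : SqArr (RV C)) :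
  mkVArr (s_u _ s) = mkVArr (s_u _ t) -> mkVArr (s_u' _ s) = mkVArr (s_u' _ t) -> s = t.
Proof.
destruct s as [? ? ? ? u u' [] [] []], t as [? ? ? ? w w' [] [] []]; cbn.
intros Hu Hu'. dependent destruction Hu. dependent destruction Hu'. reflexivity.
Qed.

Lemma dcomm_RH {X Y Y' : DblCat} {D : Cat} (F : DblFunctor X Y) (G : DblFunctor Y (RH D))
    (H : DblFunctor X Y') (K : DblFunctor Y' (RH D)) :
  (forall x, F0 G (F0 F x) = F0 K (F0 H x)) ->
  (forall h, mapH G (mapH F h) = mapH K (mapH H h)) -> dcomm F G H K.
Proof.
intros Hobj Hh. split; [exact Hobj | split; [exact Hh | split]].
- intro w. apply RH_varr_eq; apply Hobj.
- intro s. apply RH_sqarr_eq; [exact (Hh (mkHArr (s_a _ s))) | exact (Hh (mkHArr (s_c _ s)))].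
Qed.

Lemma dcomm_RV {X Y Y' : DblCat} {D : Cat} (F : DblFunctor X Y) (G : DblFunctor Y (RV D))
    (H : DblFunctor X Y') (K : DblFunctor Y' (RV D)) :
  (forall x, F0 G (F0 F x) = F0 K (F0 H x)) ->
  (forall w, mapV G (mapV F w) = mapV K (mapV H w)) -> dcomm F G H K.
Proof.
intros Hobj Hv. split; [exact Hobj | split; [| split; [exact Hv |]]].
- intro h. apply RV_harr_eq; apply Hobj.
- intro s. apply RV_sqarr_eq; [exact (Hv (mkVArr (s_u _ s))) | exact (Hv (mkVArr (s_u' _ s)))].
Qed.

Lemma RH_triv_fib (C D : Cat) (p : Functor C D) :
  surj_obj_full C D p -> dtriv_fib (RH C) (RH D) (RH_functor p).
Proof.
intros [p_obj p_full]. split; [exact p_obj | split; [exact p_full | split]].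
- intros [y y' []]. destruct (p_obj y) as [x <-], (p_obj y') as [x' <-].
  exists (@mkVArr (RH C) x x' tt). reflexivity.
- intros. exists tt. split; [apply unit_eq | intros; apply unit_eq].
Qed.

Lemma RV_triv_fib (C D : Cat) (p : Functor C D) :
  surj_obj_mor C D p -> dtriv_fib (RV C) (RV D) (RV_functor p).
Proof.
intros [p_obj p_mor]. split; [exact p_obj | split; [| split]].
- intros. exists tt. apply unit_eq.
- intros w. destruct (p_mor (Arr_of_VArr w)) as [f Hf].
  exists (VArr_of_Arr f). destruct w; exact (f_equal VArr_of_Arr Hf).
- intros. exists tt. split; [apply unit_eq | intros; apply unit_eq].
Qed.

Lemma cofibration_UH (A B : DblCat) (F : DblFunctor A B) :
  dcofibration F -> fLLP (UHF F) surj_obj_full.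
Proof.
intros Fcof C D p p_triv u v [Hobj Hmor].
assert (Hcomm : dcomm (transposeH u) (RH_functor p) F (transposeH v)).
{ apply dcomm_RH; [exact Hobj |].
  intros [s t m]. exact (f_equal HArr_of_Arr (Hmor (@mkArr (UH A) s t m))). }
destruct (Fcof _ _ _ (RH_triv_fib C D p p_triv) _ _ Hcomm) as [d [Htop Hbot]].
exists (restrictH d). split; split.
- exact (proj1 Htop).
- intros [s t m]. exact (f_equal Arr_of_HArr (proj1 (proj2 Htop) (mkHArr m))).
- exact (proj1 Hbot).
- intros [s t m]. exact (f_equal Arr_of_HArr (proj1 (proj2 Hbot) (mkHArr m))).
Qed.

Lemma cofibration_UV (A B : DblCat) (F : DblFunctor A B) :
  dcofibration F -> fLLP (UVF F) surj_obj_mor.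
Proof.
intros Fcof C D p p_triv u v [Hobj Hmor].
assert (Hcomm : dcomm (transposeV u) (RV_functor p) F (transposeV v)).
{ apply dcomm_RV; [exact Hobj |].
  intros [s t m]. exact (f_equal VArr_of_Arr (Hmor (@mkArr (UV A) s t m))). }
destruct (Fcof _ _ _ (RV_triv_fib C D p p_triv) _ _ Hcomm) as [d [Htop Hbot]].
exists (restrictV d). split; split.
- exact (proj1 Htop).
- intros [s t m]. exact (f_equal Arr_of_VArr (proj1 (proj2 (proj2 Htop)) (mkVArr m))).
- exact (proj1 Hbot).
- intros [s t m]. exact (f_equal Arr_of_VArr (proj1 (proj2 (proj2 Hbot)) (mkVArr m))).
Qed.

(** [Reindex C I o]: the category with objects [I] and morphisms [i -> j] the
    morphisms [o i -> o j] of [C] (the full image of [o], with repetitions). *)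
Definition Reindex (C : Cat) (I : Type) (o : I -> cob C) : Cat :=
  {| cob := I; chom := fun i j => chom C (o i) (o j); cid := fun i => cid C (o i);
     ccomp := fun i j k f g => ccomp C f g;
     cassoc := fun i j k l f g h => cassoc C _ _ _ _ f g h;
     cidl := fun i j f => cidl C _ _ f; cidr := fun i j f => cidr C _ _ f |}.

Definition reindex_incl (C : Cat) (I : Type) (o : I -> cob C) : Functor (Reindex C I o) C :=
  Build_Functor (Reindex C I o) C o (fun i j f => f) (fun _ => eq_refl)
    (fun _ _ _ _ _ => eq_refl).

Definition into_reindex {X C : Cat} (I : Type) (o : I -> cob C) (Fn : Functor X C)
    (f0 : cob X -> I) (E : forall x, fo Fn x = o (f0 x)) : Functor X (Reindex C I o).
Proof.
refine (Build_Functor X (Reindex C I o) f0 (fun x y m => chcast C (E x) (E y) (fm Fn m)) _ _).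
- intros x. cbn. rewrite fm_id. apply chcast_id.
- intros x y z f g. cbn. rewrite fm_comp. apply chcast_comp.
Defined.

Definition reindex_map {C D : Cat} (P : Functor C D) (I : Type) (o : I -> cob C) :
    Functor (Reindex C I o) (Reindex D I (fun i => fo P (o i))) :=
  Build_Functor (Reindex C I o) (Reindex D I (fun i => fo P (o i))) (fun i => i)
    (fun i j f => fm P f) (fun i => fm_id _ _ P (o i))
    (fun i j k f g => fm_comp _ _ P _ _ _ f g).

Definition full {C D : Cat} (p : Functor C D) : Prop :=
  forall x x' (g : chom D (fo p x) (fo p x')), exists f : chom C x x', fm p f = g.

Lemma reindex_map_surj_obj_full {C D : Cat} (P : Functor C D) (I : Type) (o : I -> cob C) :
  full P -> surj_obj_full _ _ (reindex_map P I o).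
Proof.
intros P_full. split; [intro i; exists i; reflexivity |].
intros i j g. exact (P_full (o i) (o j) g).
Qed.

(** Lifting against a full functor with a prescribed object map [o]: lift
    against [reindex_map p o] instead, which forces the object map. *)
Lemma lift_full_with_objects {A B C D : Cat} (i : Functor A B) (p : Functor C D)
    (u : Functor A C) (v : Functor B D) (o : cob B -> cob C) :
  fLLP i surj_obj_full -> full p -> fcomm u p i v ->
  (forall a, o (fo i a) = fo u a) -> (forall y, fo p (o y) = fo v y) ->
  exists d : Functor B C, (forall y, fo d y = o y) /\ ftri i d u /\ ftri d p v.
Proof.
intros i_llp p_full [_ Hmor] Hu Hv.
set (u' := into_reindex (cob B) o u (fo i) (fun a => eq_sym (Hu a))).
set (v' := into_reindex (cob B) (fun y => fo p (o y)) v (fun y => y) (fun y => eq_sym (Hv y))).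
assert (Hcomm' : fcomm u' (reindex_map p (cob B) o) i v').
{ split; [reflexivity |]. intros [s t m].
  apply (f_equal (@mkArr (Reindex D _ (fun y => fo p (o y))) (fo i s) (fo i t))).
  refine (fm_chcast p _ _ _ _ _ _ (fm u m) (fm v (fm i m)) _ _ _ _ _).
  exact (Hmor (mkArr m)). }
destruct (i_llp _ _ _ (reindex_map_surj_obj_full p (cob B) o p_full) u' v' Hcomm')
  as [d' [[Htop_obj Htop_mor] [Hbot_obj Hbot_mor]]].
exists (fcomp d' (reindex_incl C (cob B) o)). split; [| split; split].
- intro y. exact (f_equal o (Hbot_obj y)).
- intro a. cbn. rewrite Htop_obj. apply Hu.
- intro f. change (mapA (reindex_incl C _ o) (mapA d' (mapA i f)) = mapA u f).
  rewrite Htop_mor. destruct f. apply chcast_arr.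
- intro y. cbn. rewrite (Hbot_obj y : fo d' y = y). apply Hv.
- intro g. change (mapA (reindex_incl D _ (fun y => fo p (o y)))
    (mapA (reindex_map p _ o) (mapA d' g)) = mapA v g).
  rewrite Hbot_mor. destruct g. apply chcast_arr.
Qed.

Lemma sqarr_inj (X : DblCat) A B C D (u : hom_v X A C) (u' : hom_v X B D) a c
    (s t : sq X u u' a c) :
  mkSqArr s = mkSqArr t -> s = t.
Proof. intros H. dependent destruction H. reflexivity. Qed.

Lemma sqarr_cast (X : DblCat) A B C D (u u1 : hom_v X A C) (u' u1' : hom_v X B D)
    (a a1 : hom_h X A B) (c c1 : hom_h X C D) (e1 : u = u1) (e2 : u' = u1') (e3 : a = a1)
    (e4 : c = c1) (s : sq X u u' a c) :
  mkSqArr (sq_cast (@sq X) e1 e2 e3 e4 s) = mkSqArr s.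
Proof. destruct e1, e2, e3, e4. reflexivity. Qed.

Lemma sqarr_transport (X : DblCat) (S : SqArr X) A B C D (u : hom_v X A C)
    (u' : hom_v X B D) (a : hom_h X A B) (c : hom_h X C D) :
  mkVArr u = mkVArr (s_u _ S) -> mkVArr u' = mkVArr (s_u' _ S) ->
  mkHArr a = mkHArr (s_a _ S) -> mkHArr c = mkHArr (s_c _ S) ->
  exists be : sq X u u' a c, mkSqArr be = S.
Proof.
destruct S as [sA sB sC sD su su' sa sc ss]. cbn. intros H1 H2 H3 H4.
dependent destruction H1. dependent destruction H2. dependent destruction H3.
dependent destruction H4. exists ss. reflexivity.
Qed.

Lemma hcompS_cong (X : DblCat) A B C D E F (u : hom_v X A D) (u' : hom_v X B E)
    (u'' : hom_v X C F) a b c d A2 B2 C2 D2 E2 F2 (w : hom_v X A2 D2) (w' : hom_v X B2 E2)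
    (w'' : hom_v X C2 F2) a2 b2 c2 d2 (x1 : sq X u u' a c) (x2 : sq X u' u'' b d)
    (y1 : sq X w w' a2 c2) (y2 : sq X w' w'' b2 d2) :
  mkSqArr x1 = mkSqArr y1 -> mkSqArr x2 = mkSqArr y2 ->
  mkSqArr (hcompS X x1 x2) = mkSqArr (hcompS X y1 y2).
Proof. intros H1 H2. dependent destruction H1. dependent destruction H2. reflexivity. Qed.

Lemma vcompS_cong (X : DblCat) A B C D E F (u : hom_v X A C) (u' : hom_v X B D)
    (v : hom_v X C E) (v' : hom_v X D F) (a : hom_h X A B) (c : hom_h X C D)
    (e : hom_h X E F) A2 B2 C2 D2 E2 F2 (u2 : hom_v X A2 C2) (u2' : hom_v X B2 D2)
    (v2 : hom_v X C2 E2) (v2' : hom_v X D2 F2) (a2 : hom_h X A2 B2) (c2 : hom_h X C2 D2)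
    (e2 : hom_h X E2 F2) (x1 : sq X u u' a c) (x2 : sq X v v' c e)
    (y1 : sq X u2 u2' a2 c2) (y2 : sq X v2 v2' c2 e2) :
  mkSqArr x1 = mkSqArr y1 -> mkSqArr x2 = mkSqArr y2 ->
  mkSqArr (vcompS X x1 x2) = mkSqArr (vcompS X y1 y2).
Proof. intros H1 H2. dependent destruction H1. dependent destruction H2. reflexivity. Qed.

Lemma idH_cong (X : DblCat) A B A2 B2 (a : hom_h X A B) (b : hom_h X A2 B2) :
  mkHArr a = mkHArr b -> mkSqArr (idH X a) = mkSqArr (idH X b).
Proof. intros H. dependent destruction H. reflexivity. Qed.

Lemma idV_cong (X : DblCat) A B A2 B2 (a : hom_v X A B) (b : hom_v X A2 B2) :
  mkVArr a = mkVArr b -> mkSqArr (idV X a) = mkSqArr (idV X b).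
Proof. intros H. dependent destruction H. reflexivity. Qed.

(** The functoriality axioms of a double functor on squares, stated with
    boundaries so that no transport is visible. *)
Section FunctorOnSquares.
Variables (X Y : DblCat) (G : DblFunctor X Y).

Lemma Fs_cast A B C D (u u1 : hom_v X A C) (u' u1' : hom_v X B D) (a a1 : hom_h X A B)
    (c c1 : hom_h X C D) (e1 : u = u1) (e2 : u' = u1') (e3 : a = a1) (e4 : c = c1)
    (s : sq X u u' a c) :
  mkSqArr (Fs G (sq_cast (@sq X) e1 e2 e3 e4 s)) = mkSqArr (Fs G s).
Proof. destruct e1, e2, e3, e4. reflexivity. Qed.

Lemma Fs_hcompS A B C D E F (u : hom_v X A D) (u' : hom_v X B E) (u'' : hom_v X C F)
    (a : hom_h X A B) (b : hom_h X B C) (c : hom_h X D E) (d : hom_h X E F)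
    (al : sq X u u' a c) (be : sq X u' u'' b d) :
  mkSqArr (Fs G (hcompS X al be)) = mkSqArr (hcompS Y (Fs G al) (Fs G be)).
Proof. rewrite <- (Fs_hcomp _ _ G). symmetry. apply sqarr_cast. Qed.

Lemma Fs_vcompS A B C D E F (u : hom_v X A C) (u' : hom_v X B D) (v : hom_v X C E)
    (v' : hom_v X D F) (a : hom_h X A B) (c : hom_h X C D) (e : hom_h X E F)
    (al : sq X u u' a c) (be : sq X v v' c e) :
  mkSqArr (Fs G (vcompS X al be)) = mkSqArr (vcompS Y (Fs G al) (Fs G be)).
Proof. rewrite <- (Fs_vcomp _ _ G). symmetry. apply sqarr_cast. Qed.

Lemma Fs_idHS A B (a : hom_h X A B) : mkSqArr (Fs G (idH X a)) = mkSqArr (idH Y (Fh G a)).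
Proof. rewrite <- (Fs_idH _ _ G). symmetry. apply sqarr_cast. Qed.

Lemma Fs_idVS A B (a : hom_v X A B) : mkSqArr (Fs G (idV X a)) = mkSqArr (idV Y (Fv G a)).
Proof. rewrite <- (Fs_idV _ _ G). symmetry. apply sqarr_cast. Qed.

End FunctorOnSquares.

Definition sq_fully_faithful {C D : DblCat} (P : DblFunctor C D) : Prop :=
  forall (A B0 C' D0 : dob C) (u : hom_v C A C') (u' : hom_v C B0 D0)
      (a : hom_h C A B0) (c : hom_h C C' D0)
      (be : sq D (Fv P u) (Fv P u') (Fh P a) (Fh P c)),
      exists al : sq C u u' a c, Fs P al = be /\
        forall al' : sq C u u' a c, Fs P al' = be -> al' = al.

Lemma sq_faithful {C D : DblCat} (P : DblFunctor C D) (P_sq : sq_fully_faithful P)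
    A B C' D' (u : hom_v C A C') (u' : hom_v C B D') a c (x y : sq C u u' a c) :
  mkSqArr (Fs P x) = mkSqArr (Fs P y) -> x = y.
Proof.
intro H. apply sqarr_inj in H. destruct (P_sq _ _ _ _ u u' a c (Fs P x)) as [al [_ Huniq]].
rewrite (Huniq x eq_refl), (Huniq y (eq_sym H)). reflexivity.
Qed.

Lemma sqarr_faithful {C D : DblCat} (P : DblFunctor C D) (P_sq : sq_fully_faithful P)
    A B C' D' (u : hom_v C A C') (u' : hom_v C B D') a c A2 B2 C2 D2 (w : hom_v C A2 C2)
    (w' : hom_v C B2 D2) b e (x : sq C u u' a c) (y : sq C w w' b e) :
  mkVArr u = mkVArr w -> mkVArr u' = mkVArr w' -> mkHArr a = mkHArr b ->
  mkHArr c = mkHArr e -> mkSqArr (Fs P x) = mkSqArr (Fs P y) -> mkSqArr x = mkSqArr y.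
Proof.
intros H1 H2 H3 H4. dependent destruction H1. dependent destruction H2.
dependent destruction H3. dependent destruction H4.
intro H. rewrite (sq_faithful P P_sq _ _ _ _ _ _ _ _ x y H). reflexivity.
Qed.

(** Gluing: given [P : C -> D] fully faithful on squares, an object map [o]
    and compatible horizontal and vertical functors [fh], [fv] over [v : B -> D],
    the action on squares is forced, and the data form a double functor
    [B -> C] lying over [v]. *)
Section Glue.
Variables (B C D : DblCat) (P : DblFunctor C D) (v : DblFunctor B D).
Hypothesis P_sq : sq_fully_faithful P.
Variable o : dob B -> dob C.
Variable fh : forall {x y}, hom_h B x y -> hom_h C (o x) (o y).
Variable fv : forall {x y}, hom_v B x y -> hom_v C (o x) (o y).
Hypothesis fh_id : forall x, fh (hid B x) = hid C (o x).
Hypothesis fh_comp : forall x y z (a : hom_h B x y) (b : hom_h B y z),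
  fh (hcomp B a b) = hcomp C (fh a) (fh b).
Hypothesis fv_id : forall x, fv (vid B x) = vid C (o x).
Hypothesis fv_comp : forall x y z (a : hom_v B x y) (b : hom_v B y z),
  fv (vcomp B a b) = vcomp C (fv a) (fv b).
Hypothesis o_over : forall y, F0 P (o y) = F0 v y.
Hypothesis fh_over : forall x y (a : hom_h B x y), mkHArr (Fh P (fh a)) = mkHArr (Fh v a).
Hypothesis fv_over : forall x y (a : hom_v B x y), mkVArr (Fv P (fv a)) = mkVArr (Fv v a).

Lemma glue_sq_exists A0 B0 C0 D0 (uu : hom_v B A0 C0) (uu' : hom_v B B0 D0)
    (a : hom_h B A0 B0) (c : hom_h B C0 D0) (s : sq B uu uu' a c) :
  exists al : sq C (fv uu) (fv uu') (fh a) (fh c), mkSqArr (Fs P al) = mkSqArr (Fs v s).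
Proof.
destruct (sqarr_transport D (mkSqArr (Fs v s)) _ _ _ _ (Fv P (fv uu)) (Fv P (fv uu'))
  (Fh P (fh a)) (Fh P (fh c)) (fv_over _ _ _) (fv_over _ _ _) (fh_over _ _ _) (fh_over _ _ _))
  as [be Hbe].
destruct (P_sq _ _ _ _ _ _ _ _ be) as [al [Hal _]].
exists al. rewrite Hal. exact Hbe.
Qed.

Definition glue_sq {A0 B0 C0 D0} {uu : hom_v B A0 C0} {uu' : hom_v B B0 D0}
    {a : hom_h B A0 B0} {c : hom_h B C0 D0} (s : sq B uu uu' a c) :
    sq C (fv uu) (fv uu') (fh a) (fh c) :=
  proj1_sig (constructive_indefinite_description _ (glue_sq_exists _ _ _ _ uu uu' a c s)).

Lemma glue_sq_over A0 B0 C0 D0 (uu : hom_v B A0 C0) (uu' : hom_v B B0 D0)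
    (a : hom_h B A0 B0) (c : hom_h B C0 D0) (s : sq B uu uu' a c) :
  mkSqArr (Fs P (glue_sq s)) = mkSqArr (Fs v s).
Proof.
unfold glue_sq. exact (proj2_sig (constructive_indefinite_description _ (glue_sq_exists _ _ _ _ uu uu' a c s))).
Qed.

Definition glue : DblFunctor B C.
Proof.
refine {| F0 := o; Fh := @fh; Fv := @fv; Fs := @glue_sq;
  Fh_id := fh_id; Fh_comp := fh_comp; Fv_id := fv_id; Fv_comp := fv_comp |};
  intros; apply (sq_faithful P P_sq); rewrite Fs_cast, glue_sq_over.
- rewrite Fs_hcompS, Fs_hcompS. apply hcompS_cong; symmetry; apply glue_sq_over.
- rewrite Fs_vcompS, Fs_vcompS. apply vcompS_cong; symmetry; apply glue_sq_over.
- rewrite Fs_idHS, Fs_idHS. apply idH_cong. symmetry. apply fh_over.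
- rewrite Fs_idVS, Fs_idVS. apply idV_cong. symmetry. apply fv_over.
Defined.

Lemma glue_over : dtri glue P v.
Proof.
split; [exact o_over | split; [| split]].
- intros [x y a]. apply fh_over.
- intros [x y a]. apply fv_over.
- intros s. apply glue_sq_over.
Qed.

(** [glue] also extends [u] along [F], provided its horizontal and vertical
    parts do: on squares this follows from faithfulness of [P]. *)
Lemma glue_under (A : DblCat) (F : DblFunctor A B) (u : DblFunctor A C) :
  dcomm u P F v ->
  (forall a, o (F0 F a) = F0 u a) ->
  (forall h, mapH glue (mapH F h) = mapH u h) ->
  (forall w, mapV glue (mapV F w) = mapV u w) -> dtri F glue u.
Proof.
intros [_ [_ [_ Hsq]]] Hobj Hh Hv. split; [exact Hobj | split; [exact Hh | split; [exact Hv |]]].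
intros [sA sB sC sD su su' sa sc ss]. unfold mapS; cbn.
apply (sqarr_faithful P P_sq).
- exact (Hv (mkVArr su)).
- exact (Hv (mkVArr su')).
- exact (Hh (mkHArr sa)).
- exact (Hh (mkHArr sc)).
- rewrite glue_sq_over. exact (eq_sym (Hsq (mkSqArr ss))).
Qed.

End Glue.

Definition UH_harr {X : DblCat} (g : Arr (UH X)) : HArr X := @mkHArr X _ _ (a_m g).
Definition UH_arr {X : DblCat} (h : HArr X) : Arr (UH X) := @mkArr (UH X) _ _ (ha_m h).
Definition UV_varr {X : DblCat} (g : Arr (UV X)) : VArr X := @mkVArr X _ _ (a_m g).
Definition UV_arr {X : DblCat} (w : VArr X) : Arr (UV X) := @mkArr (UV X) _ _ (va_m w).

Lemma cofibration_of_UH_UV (A B : DblCat) (F : DblFunctor A B) :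
  fLLP (UHF F) surj_obj_full -> fLLP (UVF F) surj_obj_mor -> dcofibration F.
Proof.
intros H_llp V_llp C D P [P_obj [P_full [P_v P_sq]]] u v Hcomm.
pose proof Hcomm as [c_obj [c_h [c_v _]]].
assert (P_surj : surj_obj_mor _ _ (UVF P)).
{ split; [exact P_obj |]. intros [s t m]. destruct (P_v (mkVArr m)) as [[x y w] Hw].
  exists (@mkArr (UV C) x y w). exact (f_equal UV_arr Hw). }
assert (V_comm : fcomm (UVF u) (UVF P) (UVF F) (UVF v)).
{ split; [exact c_obj |]. intros [s t m]. exact (f_equal UV_arr (c_v (mkVArr m))). }
assert (H_comm : fcomm (UHF u) (UHF P) (UHF F) (UHF v)).
{ split; [exact c_obj |]. intros [s t m]. exact (f_equal UH_arr (c_h (mkHArr m))). }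
destruct (V_llp _ _ _ P_surj _ _ V_comm) as [dv [[vtop_obj vtop_mor] [vbot_obj vbot_mor]]].
destruct (lift_full_with_objects (UHF F) (UHF P) (UHF u) (UHF v) (fo dv)
  H_llp P_full H_comm vtop_obj vbot_obj) as [dh [E [[_ htop_mor] [_ hbot_mor]]]].
set (dh' := with_objects dh (fo dv) E).
assert (htop' : forall f, mapA dh' (mapA (UHF F) f) = mapA (UHF u) f).
{ intro f. unfold dh'. rewrite mapA_with_objects. apply htop_mor. }
assert (hbot' : forall g, mapA (UHF P) (mapA dh' g) = mapA (UHF v) g).
{ intro g. unfold dh'. rewrite mapA_with_objects. apply hbot_mor. }
unshelve eexists (glue B C D P v P_sq (fo dv) (fun _ _ a => fm dh' a) (fun _ _ w => fm dv w)
  (fm_id _ _ dh') (fm_comp _ _ dh') (fm_id _ _ dv) (fm_comp _ _ dv) _ _).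
- intros x y a. exact (f_equal UH_harr (hbot' (@mkArr (UH _) _ _ a))).
- intros x y w. exact (f_equal UV_varr (vbot_mor (@mkArr (UV _) _ _ w))).
- split.
  + apply glue_under; [exact Hcomm | exact vtop_obj | |].
    * intros [x y a]. exact (f_equal UH_harr (htop' (@mkArr (UH _) _ _ a))).
    * intros [x y w]. exact (f_equal UV_varr (vtop_mor (@mkArr (UV _) _ _ w))).
  + apply glue_over. exact vbot_obj.
Qed.

Theorem proposition4p7 (A B : DblCat) (F : DblFunctor A B) :
  dcofibration F <->
  (fLLP (UHF F) surj_obj_full /\ fLLP (UVF F) surj_obj_mor).
Proof.
split.
- intro F_cof. split; [exact (cofibration_UH A B F F_cof) | exact (cofibration_UV A B F F_cof)].
- intros [H_llp V_llp]. exact (cofibration_of_UH_UV A B F H_llp V_llp).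
Qed.
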